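(* Let $R$ be an associative ring with identity and $M$ a left $R$-module which is projective in $\sigma[M]$. Then the set of points $pt(SP(M))$ of the frame $SP(M)$ equals $Spec(\Lambda^{fi}(M))$.
   Context: $\Lambda^{fi}(M)$ is the set of fully invariant submodules of $M$. For $N,L\leq M$, $N_ML=\sum\{f(N)\mid f\in\mathrm{Hom}_R(M,L)\}$. A submodule $N\in\Lambda^{fi}(M)$, $N\neq M$, is semiprime in $M$ if $K\in\Lambda^{fi}(M)$ and $K_MK\subseteq N$ imply $K\subseteq N$. $SP(M)$ is the set of semiprime submodules of $M$ together with $M$, ordered by inclusion; it is a frame. For a frame $F$ with top $1$, $pt(F)$ is the set of $p\in F$, $p\neq 1$, such that $x\wedge y\leq p$ implies $x\leq p$ or $y\leq p$. $Spec(\Lambda^{fi}(M))$ is the set of $Q\in\Lambda^{fi}(M)$, $Q\neq M$, such that for all $N,L\in\Lambda^{fi}(M)$, $N_ML\subseteq Q$ implies $N\subseteq Q$ or $L\subseteq Q$. *)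

From HB Require Import structures.
From mathcomp Require Import all_boot all_algebra.
Import GRing.Theory.
Set Implicit Arguments. Unset Strict Implicit. Unset Printing Implicit Defensive.
Local Open Scope ring_scope.

Definition Rlinear (R : pzRingType) (A B : lmodType R) (f : A -> B) : Prop :=
  forall (a : R) (x y : A), f (a *: x + y) = a *: f x + f y.

Definition psubset (T : Type) (N L : T -> Prop) : Prop := forall x, N x -> L x.

Definition submod (R : pzRingType) (M : lmodType R) (N : M -> Prop) : Prop :=
  N 0 /\ (forall (a : R) (x y : M), N x -> N y -> N (a *: x + y)).

Definition generated_by (R : pzRingType) (M : lmodType R) (S : M -> Prop) : M -> Prop :=
  fun x => forall K : M -> Prop, submod K -> psubset S K -> K x.

(* f in Hom_R(M, L), viewed as an endomorphism of M with image inside L *)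
Definition hom_into (R : pzRingType) (M : lmodType R) (L : M -> Prop) (f : M -> M) : Prop :=
  Rlinear f /\ (forall x, L (f x)).

(* N_M L = sum { f(N) | f in Hom_R(M, L) } *)
Definition prod_sub (R : pzRingType) (M : lmodType R) (N L : M -> Prop) : M -> Prop :=
  generated_by (fun y => exists (f : M -> M) (x : M), hom_into L f /\ N x /\ y = f x).

Definition fully_inv (R : pzRingType) (M : lmodType R) (N : M -> Prop) : Prop :=
  submod N /\ (forall f : M -> M, Rlinear f -> forall x, N x -> N (f x)).

Definition proper (T : Type) (N : T -> Prop) : Prop := ~ (forall x, N x).

Definition semiprime (R : pzRingType) (M : lmodType R) (N : M -> Prop) : Prop :=
  fully_inv N /\ proper N /\
  (forall K : M -> Prop, fully_inv K -> psubset (prod_sub K K) N -> psubset K N).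

Definition SP (R : pzRingType) (M : lmodType R) (N : M -> Prop) : Prop :=
  semiprime N \/ (forall x, N x).

Definition is_meet (T : Type) (S : (T -> Prop) -> Prop) (x y z : T -> Prop) : Prop :=
  S z /\ psubset z x /\ psubset z y /\
  (forall w, S w -> psubset w x -> psubset w y -> psubset w z).

(* pt(SP(M)); the top element 1 of SP(M) is M *)
Definition pt_SP (R : pzRingType) (M : lmodType R) (p : M -> Prop) : Prop :=
  SP p /\ proper p /\
  (forall x y z : M -> Prop, SP x -> SP y -> is_meet (@SP R M) x y z ->
     psubset z p -> psubset x p \/ psubset y p).

Definition spec_fi (R : pzRingType) (M : lmodType R) (Q : M -> Prop) : Prop :=
  fully_inv Q /\ proper Q /\
  (forall N L : M -> Prop, fully_inv N -> fully_inv L ->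
     psubset (prod_sub N L) Q -> psubset N Q \/ psubset L Q).

Definition M_generated (R : pzRingType) (M X : lmodType R) : Prop :=
  forall x : X, generated_by (fun y => exists (f : M -> X) (m : M), Rlinear f /\ y = f m) x.

Definition in_sigma (R : pzRingType) (M N : lmodType R) : Prop :=
  exists (X : lmodType R) (i : N -> X),
    Rlinear i /\ (forall u v, i u = i v -> u = v) /\ M_generated M X.

Definition projective_in_sigma (R : pzRingType) (M : lmodType R) : Prop :=
  forall A B : lmodType R, in_sigma M A -> in_sigma M B ->
  forall g : A -> B, Rlinear g -> (forall b, exists a, g a = b) ->
  forall f : M -> B, Rlinear f ->
  exists h : M -> A, Rlinear h /\ (forall x, g (h x) = f x).

(* Spec(Λ^fi(M)) ⊆ pt(SP(M)) is formal: for x, y in SP(M) the product x_M y lies in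
   x ∩ y, which is the meet of x and y.  Conversely let N be a point with N'_M L ⊆ N,
   and consider the colons x = (N : L) = {m | f m ∈ N for all f : M -> L} and
   y = (N : x).  Then N' ⊆ x, and L ⊆ y because for semiprime N, K_M L ⊆ N implies
   L_M K ⊆ N; moreover x ∩ y ⊆ N.  Hence N' ⊆ N or L ⊆ N as soon as x and y are in
   SP(M), i.e. colons (N : S) of semiprime submodules are semiprime.  This is where
   projectivity enters: K_M S is the image of the direct sum K^(Hom(M,S)) under the sum
   of the maps, and lifting every M -> K_M S through this epimorphism shows
   N_M (K_M S) ⊆ (N_M K)_M S, so K_M K ⊆ (Q : S) forces (K_M S)_M (K_M S) ⊆ Q. *)

From HB Require Import structures.
From mathcomp Require Import all_boot all_algebra.
From mathcomp Require Import boolp classical_sets functions finmap fsbigop.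
Import GRing.Theory.
Set Implicit Arguments. Unset Strict Implicit. Unset Printing Implicit Defensive.
Local Open Scope ring_scope.

Section Linear.
Variables (R : pzRingType) (A B C : lmodType R).

Lemma Rlinear0 (f : A -> B) : Rlinear f -> f 0 = 0.
Proof.
move=> hf; have h := hf 1 0 0; rewrite !scale1r addr0 in h.
by apply: (addrI (f 0)); rewrite addr0 -h.
Qed.

Lemma Rlinear_comp (f : B -> C) (g : A -> B) :
  Rlinear f -> Rlinear g -> Rlinear (fun x => f (g x)).
Proof. by move=> hf hg a x y; rewrite hg hf. Qed.

End Linear.

Section Submodules.
Variables (R : pzRingType) (M : lmodType R).
Implicit Types (N L K Q S G : M -> Prop) (f : M -> M).

Lemma submod0 N : submod N -> N 0. Proof. by case. Qed.

Lemma submodD N x y : submod N -> N x -> N y -> N (x + y).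
Proof. by case=> _ hN hx hy; have := hN 1 x y hx hy; rewrite scale1r. Qed.

Lemma submod_sum N (I : Type) (s : seq I) (F : I -> M) :
  submod N -> (forall i, N (F i)) -> N (\sum_(i <- s) F i).
Proof.
move=> hN hF; elim: s => [|i s IH]; first by rewrite big_nil; apply: submod0.
by rewrite big_cons; apply: submodD.
Qed.

Lemma submod_generated_by G : submod (generated_by G).
Proof.
split=> [K [] //|a x y hx hy K hK hGK].
by case: (hK) => _; apply; [apply: hx | apply: hy].
Qed.

Lemma generated_by_sub G : psubset G (generated_by G).
Proof. by move=> x hx K _; apply. Qed.

Lemma generated_by_min G K : submod K -> psubset G K -> psubset (generated_by G) K.
Proof. by move=> hK hGK x; apply. Qed.

Lemma fully_inv_generated_by G :
  (forall f, Rlinear f -> forall y, G y -> G (f y)) -> fully_inv (generated_by G).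
Proof.
move=> hG; split=> [|f hf x hx]; first exact: submod_generated_by.
apply: (hx (fun m => generated_by G (f m))) => [|y hy]; last first.
  by apply: generated_by_sub; apply: hG.
split=> [|a u v hu hv].
  by rewrite /= Rlinear0 //; apply: submod0; apply: submod_generated_by.
by rewrite /= hf; case: (submod_generated_by G) => _; apply.
Qed.

Lemma submod_prod_sub N L : submod (prod_sub N L).
Proof. exact: submod_generated_by. Qed.

Lemma prod_sub_hom N L f x : hom_into L f -> N x -> prod_sub N L (f x).
Proof. by move=> hf hx; apply: generated_by_sub; exists f, x. Qed.

Lemma prod_subS N N' L L' :
  psubset N N' -> psubset L L' -> psubset (prod_sub N L) (prod_sub N' L').
Proof.
move=> hN hL; apply: generated_by_min; first exact: submod_prod_sub.
by move=> _ [f [x [[hf hfL] [hx ->]]]]; apply: prod_sub_hom (hN x hx); split=> // m; apply: hL.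
Qed.

Lemma prod_sub_subl N L : fully_inv N -> psubset (prod_sub N L) N.
Proof.
by case=> hN hNf; apply: generated_by_min => // _ [f [x [[hf _] [hx ->]]]]; apply: hNf.
Qed.

Lemma prod_sub_subr N L : submod L -> psubset (prod_sub N L) L.
Proof. by move=> hL; apply: generated_by_min => // _ [f [x [[_ hf] [_ ->]]]]. Qed.

Lemma fully_inv_prod_sub N L : fully_inv L -> fully_inv (prod_sub N L).
Proof.
case=> _ hLf; apply: fully_inv_generated_by => f hf _ [g [x [[hg hgL] [hx ->]]]].
exists (fun m => f (g m)), x; split=> //; split=> [|m]; [exact: Rlinear_comp | exact: hLf].
Qed.

Definition semiprime_cond N :=
  forall K, fully_inv K -> psubset (prod_sub K K) N -> psubset K N.

Lemma SP_iff N : SP N <-> fully_inv N /\ semiprime_cond N.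
Proof.
split=> [[[hN [_ hc]] //|hall]|[hN hc]].
  by split; [do !split=> * | move=> K _ _ x _]; apply: hall.
by case: (lem (forall x, N x)) => h; [right | left].
Qed.

Lemma prod_sub_swap Q K L : submod Q -> semiprime_cond Q -> fully_inv K -> fully_inv L ->
  psubset (prod_sub K L) Q -> psubset (prod_sub L K) Q.
Proof.
move=> hQ scQ fiK fiL hKL; apply: scQ; first exact: fully_inv_prod_sub.
move=> x hx; apply: hKL; apply: prod_subS hx.
  exact: prod_sub_subr (proj1 fiK).
exact: prod_sub_subl.
Qed.

Definition inter N L : M -> Prop := fun m => N m /\ L m.

Lemma fully_inv_inter N L : fully_inv N -> fully_inv L -> fully_inv (inter N L).
Proof.
move=> [[N0 hN] hNf] [[L0 hL] hLf]; split; first split; first by [].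
- by move=> a x y [? ?] [? ?]; split; [apply: hN | apply: hL].
- by move=> f hf x [? ?]; split; [apply: hNf | apply: hLf].
Qed.

Lemma SP_inter N L : SP N -> SP L -> SP (inter N L).
Proof.
move=> /SP_iff [fiN scN] /SP_iff [fiL scL]; apply/SP_iff.
split=> [|K fiK hKK m hm]; first exact: fully_inv_inter.
by split; [apply: scN fiK _ _ hm | apply: scL fiK _ _ hm] => // x /hKK [].
Qed.

Lemma is_meet_SP_inter N L : SP N -> SP L -> is_meet (@SP R M) N L (inter N L).
Proof.
move=> SPN SPL; split; first exact: SP_inter.
split=> [m [] //|]; split=> [m [] //|].
by move=> w _ hN hL m hm; split; [apply: hN | apply: hL].
Qed.

Definition colon Q S : M -> Prop := fun m => forall f, hom_into S f -> Q (f m).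

Lemma fully_inv_colon Q S : fully_inv Q -> fully_inv (colon Q S).
Proof.
move=> [[Q0 hQ] hQf]; do !split.
- by move=> f [hf _]; rewrite Rlinear0.
- by move=> a x y hx hy f [hf hfS]; rewrite hf; apply: hQ; [apply: hx | apply: hy].
- move=> g hg x hx f [hf hfS]; apply: (hx (fun m => f (g m))).
  by split=> [|m]; [apply: Rlinear_comp | apply: hfS].
Qed.

Lemma sub_colonP N Q S : submod Q ->
  psubset N (colon Q S) <-> psubset (prod_sub N S) Q.
Proof.
move=> hQ; split=> [hN|hNS x hx f hf]; last by apply: hNS; apply: prod_sub_hom.
by apply: generated_by_min => // _ [f [x [hf [hx ->]]]]; apply: hN.
Qed.

End Submodules.

Section SubmoduleType.
Variables (R : pzRingType) (V : lmodType R) (P : V -> Prop).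
Hypothesis hP : submod P.

Definition submod_pred : pred V := fun x => `[< P x >].

Lemma submod_pred_closed : GRing.submod_closed submod_pred.
Proof.
case: hP => P0 PZD; split=> [|a x y /asboolW Px /asboolW Py]; apply: asboolT => //.
exact: PZD.
Qed.

HB.instance Definition _ := GRing.isSubmodClosed.Build R V submod_pred submod_pred_closed.
(* The otherwise unused [submod P] argument lets instance inference find the closure
   proof from the type [subM hP]. *)
Definition subM of submod P := {x : V | submod_pred x}.
HB.instance Definition _ := [isSub of subM hP for @proj1_sig _ _].
HB.instance Definition _ := [Choice of subM hP by <:].
HB.instance Definition _ := [SubChoice_isSubLmodule of subM hP by <:].

Definition inSubM x (Px : P x) : subM hP := exist _ x (asboolT Px).

Lemma subMP (u : subM hP) : P (val u).
Proof. exact: asboolW (valP u). Qed.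

End SubmoduleType.

Section ProjectiveLift.
Variables (R : pzRingType) (M : lmodType R).
Hypothesis hproj : projective_in_sigma M.
Variables (K S : M -> Prop).
Hypothesis hK : submod K.

Definition hom_index := {classic {g : M -> M | hom_into S g}}.
Implicit Types (phi : hom_index -> M) (i : hom_index).

Lemma hom_index_hom i : hom_into S (proj1_sig i). Proof. exact: proj2_sig. Qed.

Lemma hom_index_linear i : Rlinear (proj1_sig i). Proof. exact: (hom_index_hom i).1. Qed.

(* The direct sum K^(I) over I = Hom(M, S) is modelled by finitely supported families
   I -> M with values in K, a submodule of the M-generated module of all finitely
   supported families. *)
Definition finsupp phi := exists s : {fset hom_index}, forall i, i \notin s -> phi i = 0.

Lemma submod_finsupp : submod finsupp.
Proof.
split=> [|a phi psi [s1 h1] [s2 h2]]; first by exists fset0.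
exists (s1 `|` s2)%fset => i; rewrite in_fsetU negb_or => /andP [/h1 + /h2].
by rewrite !fctE /= => -> ->; rewrite scaler0 addr0.
Qed.

Definition Kfamily phi := finsupp phi /\ forall i, K (phi i).

Lemma submod_Kfamily : submod Kfamily.
Proof.
case: submod_finsupp => fs0 fsZD; case: hK => K0 KZD.
split=> [|a phi psi [fphi Kphi] [fpsi Kpsi]]; first by split.
by split=> [|i]; [apply: fsZD | apply: KZD].
Qed.

Definition sum_hom phi : M := \sum_(i \in [set: hom_index]) proj1_sig i (phi i).

Lemma sum_homE phi (s : {fset hom_index}) : (forall i, i \notin s -> phi i = 0) ->
  sum_hom phi = \sum_(i <- s) proj1_sig i (phi i).
Proof. by move=> hs; apply: fsbigTE => i /hs ->; apply: Rlinear0 (hom_index_linear i). Qed.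

Lemma sum_hom_linear a phi psi : finsupp phi -> finsupp psi ->
  sum_hom (a *: phi + psi) = a *: sum_hom phi + sum_hom psi.
Proof.
move=> [s1 h1] [s2 h2]; set s := (s1 `|` s2)%fset.
have hs1 i : i \notin s -> phi i = 0 by rewrite in_fsetU negb_or => /andP [/h1].
have hs2 i : i \notin s -> psi i = 0 by rewrite in_fsetU negb_or => /andP [_ /h2].
rewrite (sum_homE hs1) (sum_homE hs2) (@sum_homE _ s); last first.
  by move=> i hi; rewrite !fctE /= hs1 // hs2 // scaler0 addr0.
by rewrite scaler_sumr -big_split; apply: eq_bigr => i _; apply: hom_index_linear.
Qed.

Definition single i0 (m : M) : hom_index -> M := fun i => if i == i0 then m else 0.

Lemma single_out i0 m i : i \notin [fset i0]%fset -> single i0 m i = 0.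
Proof. by rewrite inE /single => /negPf ->. Qed.

Lemma finsupp_single i0 m : finsupp (single i0 m).
Proof. by exists [fset i0]%fset; apply: single_out. Qed.

Lemma sum_hom_single i0 m : sum_hom (single i0 m) = proj1_sig i0 m.
Proof. by rewrite (sum_homE (single_out m)) big_seq_fset1 /single eqxx. Qed.

Lemma Kfamily_sum_hom phi : Kfamily phi -> prod_sub K S (sum_hom phi).
Proof.
move=> [[s hs] Kphi]; rewrite (sum_homE hs).
by apply: submod_sum (submod_prod_sub _ _) _ => i; apply: prod_sub_hom (hom_index_hom i) _.
Qed.

Lemma sum_hom_onto t : prod_sub K S t -> exists2 phi, Kfamily phi & sum_hom phi = t.
Proof.
move=> ht; apply: (generated_by_min (K := fun t => exists2 phi, Kfamily phi & sum_hom phi = t)) ht.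
  split=> [|a x y [phi hphi <-] [psi hpsi <-]].
    exists 0; first exact: submod0 submod_Kfamily.
    by rewrite (@sum_homE _ fset0) ?big_nil.
  exists (a *: phi + psi); first by case: submod_Kfamily => _; apply.
  exact: sum_hom_linear hphi.1 hpsi.1.
move=> _ [g [k [hg [hk ->]]]].
pose i0 : hom_index := exist _ g hg.
exists (single i0 k); last exact: sum_hom_single.
split=> [|i]; first exact: finsupp_single.
by rewrite /single; case: eqP => _ //; apply: submod0.
Qed.

Local Notation A := (subM submod_Kfamily).
Local Notation B := (subM (submod_prod_sub K S)).
Local Notation X := (subM submod_finsupp).

Definition sum_hom_sub (a : A) : B := inSubM _ (Kfamily_sum_hom (subMP a)).

Lemma sum_hom_sub_linear : Rlinear sum_hom_sub.
Proof. by move=> a u v; apply: val_inj; apply: sum_hom_linear (subMP u).1 (subMP v).1. Qed.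

Lemma sum_hom_sub_onto b : exists a, sum_hom_sub a = b.
Proof.
have [phi hphi e] := sum_hom_onto (subMP b).
by exists (inSubM submod_Kfamily hphi); apply: val_inj.
Qed.

Definition single_sub i0 (m : M) : X := inSubM _ (finsupp_single i0 m).

Lemma single_sub_linear i0 : Rlinear (single_sub i0).
Proof.
move=> a u v; apply: val_inj; apply: funext => i /=.
by rewrite !fctE /= /single; case: eqP; rewrite ?scaler0 ?addr0.
Qed.

Lemma M_generated_finsupp : M_generated M X.
Proof.
move=> x; have [s hs] := subMP x.
have -> : x = \sum_(i <- s) single_sub i (val x i).
  apply: val_inj; rewrite raddf_sum; apply: funext => j; rewrite fct_sumE /= /single.
  have [js|jns] := boolP (j \in s).
    rewrite (bigD1_seq j) ?fset_uniq //= (eqxx j) big1 ?addr0 // => i.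
    by rewrite eq_sym => /negPf ->.
  by rewrite big1_seq ?hs // => i /andP [_ hi]; case: eqP => // ji; rewrite ji hi in jns.
apply: submod_sum (submod_generated_by _) _ => i; apply: generated_by_sub.
by exists (single_sub i), (val x i); split=> //; apply: single_sub_linear.
Qed.

Lemma in_sigma_Kfamily : in_sigma M A.
Proof.
exists X, (fun a : A => inSubM submod_finsupp (subMP a).1); split.
  by move=> a u v; apply: val_inj.
split=> [u v huv|]; last exact: M_generated_finsupp.
by apply: val_inj; apply: (congr1 val huv).
Qed.

Lemma in_sigma_prod_sub : in_sigma M B.
Proof.
exists M, val; split=> //; split; first exact: val_inj.
by move=> x; apply: generated_by_sub; exists id, x.
Qed.

Lemma prod_sub_assoc_incl N : psubset (prod_sub N (prod_sub K S)) (prod_sub (prod_sub N K) S).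
Proof.
apply: generated_by_min => [|_ [h [x [[hh hhT] [hx ->]]]]]; first exact: submod_prod_sub.
pose hB m : B := inSubM _ (hhT m).
have hB_linear : Rlinear hB by move=> a u v; apply: val_inj; apply: hh.
have [lift [lift_linear lift_fac]] :=
  hproj in_sigma_Kfamily in_sigma_prod_sub sum_hom_sub_linear sum_hom_sub_onto hB_linear.
have -> : h x = sum_hom (val (lift x)) by rewrite -[h x]/(val (hB x)) -lift_fac.
have [[s hs] _] := subMP (lift x).
rewrite (sum_homE hs); apply: submod_sum (submod_prod_sub _ _) _ => i.
apply: prod_sub_hom (hom_index_hom i) _.
apply: (prod_sub_hom (f := fun m => val (lift m) i)) hx.
by split=> [a u v|m]; [rewrite lift_linear | exact: (subMP (lift m)).2].
Qed.

End ProjectiveLift.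

Section Points.
Variables (R : pzRingType) (M : lmodType R).
Implicit Types (N L K Q S : M -> Prop).

Lemma semiprime_cond_colon Q S : projective_in_sigma M ->
  fully_inv Q -> semiprime_cond Q -> fully_inv S -> semiprime_cond (colon Q S).
Proof.
move=> hproj fiQ scQ fiS K fiK hKK; apply/sub_colonP; first exact: fiQ.1.
apply: scQ; first exact: fully_inv_prod_sub.
move=> m hm; apply: (sub_colonP _ _ fiQ.1).1 hKK _ _.
apply: (prod_sub_assoc_incl hproj fiK.1); apply: prod_subS hm => //.
exact: prod_sub_subl.
Qed.

Lemma SP_colon Q S : projective_in_sigma M -> SP Q -> fully_inv S -> SP (colon Q S).
Proof.
move=> hproj /SP_iff [fiQ scQ] fiS; apply/SP_iff; split; first exact: fully_inv_colon.
exact: semiprime_cond_colon.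
Qed.

Lemma spec_fi_pt_SP N : spec_fi N -> pt_SP N.
Proof.
move=> [fiN [propN primeN]].
have scN : semiprime_cond N by move=> K fiK hKK; case: (primeN K K fiK fiK hKK).
split; first exact/SP_iff.
split=> // x y z SPx SPy [_ [_ [_ zmax]]] hzN.
have [fi_x _] := (SP_iff x).1 SPx; have [fi_y _] := (SP_iff y).1 SPy.
apply: primeN => // m hm; apply/hzN/(zmax _ (SP_inter SPx SPy)) => [u []|u []|] //.
by split; [apply: prod_sub_subl hm | apply: prod_sub_subr fi_y.1 _ hm].
Qed.

Lemma pt_SP_spec_fi N : (forall S, fully_inv S -> SP (colon N S)) -> pt_SP N -> spec_fi N.
Proof.
move=> SP_colonN [SPN [propN ptN]]; have [fiN scN] := (SP_iff N).1 SPN.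
split=> //; split=> // N' L _ fiL hN'L.
pose x := colon N L; pose y := colon N x.
have fi_x : fully_inv x := fully_inv_colon L fiN.
have N'x : psubset N' x by apply/sub_colonP => //; exact: fiN.1.
have Ly : psubset L y.
  apply/sub_colonP; first exact: fiN.1.
  by apply: prod_sub_swap fiN.1 scN fi_x fiL _; apply/sub_colonP => //; exact: fiN.1.
have xyN : psubset (inter x y) N.
  apply: scN; first exact: fully_inv_inter (fully_inv_colon x fiN).
  move=> m hm; apply: (sub_colonP y x fiN.1).1 => //.
  by apply: prod_subS hm => u [].
have [xN|yN] := ptN x y _ (SP_colonN L fiL) (SP_colonN x fi_x)
  (is_meet_SP_inter (SP_colonN L fiL) (SP_colonN x fi_x)) xyN.
  by left=> m /N'x /xN.
by right=> m /Ly /yN.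
Qed.

End Points.

Theorem proposition4p29 (R : pzRingType) (M : lmodType R) :
  projective_in_sigma M ->
  forall N : M -> Prop, pt_SP N <-> spec_fi N.
Proof.
move=> hproj N; split; last exact: spec_fi_pt_SP.
move=> ptN; apply: (pt_SP_spec_fi _ ptN) => S.
exact: SP_colon hproj ptN.1.
Qed.
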